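(* Let $\psi,\phi$ be full QBFs and $X$ a finite set of propositional variables. Let $p \in \mathrm{var}(\psi)\setminus \mathrm{free}(\phi)$ be such that no occurrence of $p$ in $\psi$ lies in the scope of a quantifier of $\psi$. Let $Y\subseteq \mathrm{var}(\psi)\setminus \mathrm{var}(\phi)$. Let $X^- = \{x^- : x \in X\}$ and $X^+ = \{x^+ : x \in X\}$ be sets of fresh variables (pairwise distinct and not occurring in $\psi$, $\phi$, $X$, $Y$), and let $\sigma = \{x/x^+ : x \in X\}$. Then $$\exists Y \left(\psi[p/\exists X \phi]\right) \equiv \forall X^-\;\exists (Y \cup X^+ \cup \{p\}) \Big( \psi \land (p \leftrightarrow \phi[\sigma]) \land \bigwedge_{x \in X}\big(\lnot p \rightarrow (x^+ \leftrightarrow x^-)\big) \Big)$$ and $$\exists Y \left(\psi[p/\forall X \phi]\right) \equiv \forall X^-\;\exists (Y \cup X^+ \cup \{p\}) \Big( \psi \land (p \leftrightarrow \phi[\sigma]) \land \bigwedge_{x \in X}\big(p \rightarrow (x^+ \leftrightarrow x^-)\big) \Big).$$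
   Context: Fix a countably infinite set $\mathbb{P}$ of propositional variables and a set of boolean operators, each $k$-ary operator $f^k$ ($k\ge 0$) interpreted by a boolean function $\{0,1\}^k\to\{0,1\}$, containing $\bot,\lnot,\land,\rightarrow,\leftrightarrow$. Full QBFs: the smallest set containing every $p\in\mathbb{P}$, closed under $f^k(\phi_1,\ldots,\phi_k)$ and under $\exists X\phi$, $\forall X\phi$ for finite (possibly empty) $X\subseteq\mathbb{P}$. A valuation $V:\mathbb{P}\to\{0,1\}$ is extended by applying the boolean functions, with $V(\exists X\phi)=1$ iff $V'(\phi)=1$ for some $V'$ agreeing with $V$ on $\mathbb{P}\setminus X$, and $V(\forall X\phi)=1$ iff $V'(\phi)=1$ for all such $V'$. $\phi\equiv\psi$ means $V(\phi)=V(\psi)$ for every valuation $V$. $\mathrm{var}(\phi)$ is the set of variables occurring in $\phi$, $\mathrm{free}(\phi)$ the set of its free variables. $\phi[\sigma]$ for a substitution $\sigma=\{p_1/\phi_1,\ldots,p_k/\phi_k\}$ (distinct $p_i$) simultaneously replaces all free occurrences of each $p_i$ by $\phi_i$. An empty conjunction is $\top$. *)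

From mathcomp Require Import all_boot.
From mathcomp Require Import boolp.

Set Implicit Arguments.
Unset Strict Implicit.
Unset Printing Implicit Defensive.

(* Operators: every boolean function is available as an operator; a k-ary
   operator is [Op f args] with [size args = k], interpreted by [f] on the
   list of argument values. *)
Inductive qbf : Type :=
| Var : nat -> qbf
| Op : (seq bool -> bool) -> seq qbf -> qbf
| Ex : seq nat -> qbf -> qbf
| All : seq nat -> qbf -> qbf.

Definition valuation := nat -> bool.

Definition agree_off (X : seq nat) (V V' : valuation) : Prop :=
  forall q, q \notin X -> V' q = V q.

Fixpoint eval (V : valuation) (f : qbf) {struct f} : bool :=
  match f with
  | Var p => V p
  | Op g args => g (map (fun a => eval V a) args)
  | Ex X g => `[< exists V' : valuation, agree_off X V V' /\ eval V' g >]
  | All X g => `[< forall V' : valuation, agree_off X V V' -> eval V' g >]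
  end.

Definition qequiv (f g : qbf) : Prop := forall V, eval V f = eval V g.

Fixpoint var (f : qbf) : seq nat :=
  match f with
  | Var p => [:: p]
  | Op _ args => flatten (map var args)
  | Ex X g => X ++ var g
  | All X g => X ++ var g
  end.

Fixpoint free (f : qbf) : seq nat :=
  match f with
  | Var p => [:: p]
  | Op _ args => flatten (map free args)
  | Ex X g => [seq q <- free g | q \notin X]
  | All X g => [seq q <- free g | q \notin X]
  end.

(* simultaneous substitution of free occurrences: s q is the replacement of
   the variable q (s q = Var q means q is not substituted) *)
Fixpoint subst (s : nat -> qbf) (f : qbf) : qbf :=
  match f with
  | Var p => s p
  | Op g args => Op g (map (subst s) args)
  | Ex X g => Ex X (subst (fun q => if q \in X then Var q else s q) g)
  | All X g => All X (subst (fun q => if q \in X then Var q else s q) g)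
  end.

Definition subst1 (p : nat) (a : qbf) : nat -> qbf :=
  fun q => if q == p then a else Var q.

Fixpoint unquantified (p : nat) (f : qbf) : bool :=
  match f with
  | Var _ => true
  | Op _ args => all (unquantified p) args
  | Ex X g => p \notin var (Ex X g)
  | All X g => p \notin var (All X g)
  end.

Definition Top : qbf := Op (fun _ => true) [::].
Definition Neg (a : qbf) : qbf := Op (fun s => ~~ nth false s 0) [:: a].
Definition And (a b : qbf) : qbf :=
  Op (fun s => nth false s 0 && nth false s 1) [:: a; b].
Definition Imp (a b : qbf) : qbf :=
  Op (fun s => nth false s 0 ==> nth false s 1) [:: a; b].
Definition Iff (a b : qbf) : qbf :=
  Op (fun s => nth false s 0 == nth false s 1) [:: a; b].

Definition BigAnd (l : seq qbf) : qbf := foldr And Top l.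

(* Since no occurrence of p in psi is quantified, psi[p/a] is psi evaluated with p set
   to the value of a, so both sides only differ in how that value is produced.  On the
   right, p guesses the value of the quantified formula and X+ guesses an assignment of
   X under which phi must agree with the guess.  For the existential case a guess p = 0
   forces X+ = X-, and since X- is chosen universally it can be taken to be a witness
   of phi, refuting any false guess; a guess p = 1 must exhibit a witness in X+.  The
   universal case is dual.  The freshness conditions make a valuation of
   Y, X+, p over a choice of X- the same thing as a choice of Y, a truth value and an
   assignment of X. *)

From mathcomp Require Import all_boot boolp.
From Stdlib Require List.

Set Implicit Arguments.
Unset Strict Implicit.
Unset Printing Implicit Defensive.

Definition qbf_ind' (P : qbf -> Prop) (HV : forall n, P (Var n))
  (HO : forall g l, List.Forall P l -> P (Op g l))
  (HE : forall X f, P f -> P (Ex X f)) (HA : forall X f, P f -> P (All X f)) :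
  forall f, P f :=
  fix F f := match f with
  | Var n => HV n
  | Op g l => HO g l ((fix G l := match l return List.Forall P l with
                        | [::] => List.Forall_nil P
                        | a :: l => List.Forall_cons a (F a) (G l) end) l)
  | Ex X f => HE X f (F f)
  | All X f => HA X f (F f)
  end.

Definition override (V : valuation) (X : seq nat) (T : valuation) : valuation :=
  fun q => if q \in X then T q else V q.

Definition upd (V : valuation) p b : valuation := fun q => if q == p then b else V q.

Lemma agree_off_override V X T : agree_off X V (override V X T).
Proof. by move=> q /negbTE; rewrite /override => ->. Qed.

Lemma override_agree_off V X V' : agree_off X V V' -> override V X V' =1 V'.
Proof. by move=> HV' q; rewrite /override; case: ifPn => // /HV' ->. Qed.

Lemma eval_Op V g l : eval V (Op g l) = g (map (eval V) l).
Proof. by []. Qed.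

Lemma eval_Ex V X f :
  eval V (Ex X f) = `[< exists V', agree_off X V V' /\ eval V' f >].
Proof. by []. Qed.

Lemma eval_All V X f :
  eval V (All X f) = `[< forall V', agree_off X V V' -> eval V' f >].
Proof. by []. Qed.

Lemma eval_quant_transport X f g V W (F : valuation -> valuation) :
  (forall V', agree_off X V V' -> agree_off X W (F V') /\ eval V' f = eval (F V') g) ->
  (forall W', agree_off X W W' -> exists2 V', agree_off X V V' & eval (F V') g = eval W' g) ->
  eval V (Ex X f) = eval W (Ex X g) /\ eval V (All X f) = eval W (All X g).
Proof.
move=> HF Hsurj; rewrite !eval_Ex !eval_All; split; apply: asbool_equiv_eq; split.
- case=> V' [HV' Hf]; have [HW Heq] := HF V' HV'.
  by exists (F V'); rewrite -Heq.
- by case=> W' [/Hsurj [V' HV' <-] Hg]; exists V'; split=> //; rewrite (HF V' HV').2.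
- move=> Hf W' /Hsurj [V' HV' <-].
  by rewrite -(HF V' HV').2; apply: Hf.
- by move=> Hg V' /HF [/Hg + ->].
Qed.

Lemma eval_quant_free X f V V' :
  (forall U U', {in free f, U =1 U'} -> eval U f = eval U' f) ->
  {in [seq q <- free f | q \notin X], V =1 V'} ->
  eval V (Ex X f) = eval V' (Ex X f) /\ eval V (All X f) = eval V' (All X f).
Proof.
move=> IH H; apply: (eval_quant_transport (F := override V' X)) => [U HU|W HW].
  split; first exact: agree_off_override.
  apply: IH => q Hq; rewrite /override; case: ifPn => // HqX.
  by rewrite HU // H // mem_filter HqX.
exists (override V X W); first exact: agree_off_override.
apply: IH => q _; rewrite /override; case: ifPn => HqX; first by rewrite HqX.
by rewrite HW.
Qed.

Lemma eval_free f V V' : {in free f, V =1 V'} -> eval V f = eval V' f.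
Proof.
elim/qbf_ind': f V V' => [n|g l IH|X f IH|X f IH] V V' H.
- by apply: H; rewrite inE.
- rewrite !eval_Op; congr g; elim: IH H => //= a {}l Ha _ IHl H.
  rewrite (Ha V V') ?IHl // => q Hq; apply: H; by rewrite /= mem_cat Hq ?orbT.
all: by have [] := eval_quant_free IH H.
Qed.

Lemma eval_ext f V V' : V =1 V' -> eval V f = eval V' f.
Proof. by move=> H; apply: eval_free => q _; apply: H. Qed.

Lemma free_var f : {subset free f <= var f}.
Proof.
elim/qbf_ind': f => [n|g l IH|X f IH|X f IH] q //=.
- elim: IH => //= a {}l Ha _ IHl; rewrite !mem_cat => /orP[/Ha|/IHl] ->; by rewrite ?orbT.
all: by rewrite mem_filter mem_cat => /andP[_ /IH ->]; rewrite orbT.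
Qed.

Lemma eval_quant_subst_rename X f s (r : nat -> nat) V :
  (forall s (r : nat -> nat) V, {in var f, forall q, s q = Var (r q)} ->
     (forall q, r q = q \/ r q \notin var f) -> eval V (subst s f) = eval (V \o r) f) ->
  {in X ++ var f, forall q, s q = Var (r q)} ->
  (forall q, r q = q \/ r q \notin X ++ var f) ->
  let s' q := if q \in X then Var q else s q in
  eval V (Ex X (subst s' f)) = eval (V \o r) (Ex X f) /\
  eval V (All X (subst s' f)) = eval (V \o r) (All X f).
Proof.
move=> IH Hs Hr s'; set r' := fun q => if q \in X then q else r q.
have rX q : q \notin X -> r q \notin X.
  by move=> HqX; case: (Hr q) => [->//|]; rewrite mem_cat negb_or => /andP[].
have IHr U : eval U (subst s' f) = eval (U \o r') f.
  apply: IH => [q Hq|q]; rewrite /s' /r'; case: ifPn => // HqX; [|by left|].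
    by apply: Hs; rewrite mem_cat Hq orbT.
  by case: (Hr q) => [->|]; [left|rewrite mem_cat negb_or => /andP[_]; right].
apply: (eval_quant_transport (F := fun U => U \o r')) => [U HU|W HW].
  by split=> // q HqX; rewrite /= /r' (negbTE HqX) HU ?rX.
exists (override V X W); first exact: agree_off_override.
apply: eval_ext => q; rewrite /= /r' /override.
have [HqX|HqX] := boolP (q \in X); first by rewrite HqX.
by rewrite (negbTE (rX _ HqX)) HW.
Qed.

Lemma eval_subst_rename f s (r : nat -> nat) V :
  {in var f, forall q, s q = Var (r q)} -> (forall q, r q = q \/ r q \notin var f) ->
  eval V (subst s f) = eval (V \o r) f.
Proof.
elim/qbf_ind': f s r V => [n|g l IH|X f IH|X f IH] s r V Hs Hr.
- by rewrite /= Hs ?inE.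
- rewrite !eval_Op; congr g; elim: IH Hs Hr => //= a {}l Ha _ IHl Hs Hr.
  rewrite (Ha _ r) ?IHl // => [q Hq|q|q Hq|q].
  + by apply: Hs; rewrite mem_cat Hq orbT.
  + by case: (Hr q) => [->|]; [left|rewrite mem_cat negb_or => /andP[_]; right].
  + by apply: Hs; rewrite mem_cat Hq.
  + by case: (Hr q) => [->|]; [left|rewrite mem_cat negb_or => /andP[]; right].
all: by have [] := eval_quant_subst_rename V IH Hs Hr.
Qed.

Lemma eval_subst1_notin f p a V : p \notin var f -> eval V (subst (subst1 p a) f) = eval V f.
Proof.
move=> Hp; rewrite (eval_subst_rename (r := id)) => // [q Hq|q]; last by left.
by rewrite /subst1; case: eqP => // Eq; move: Hp; rewrite -Eq Hq.
Qed.

Lemma eval_upd_notin f p b V : p \notin free f -> eval (upd V p b) f = eval V f.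
Proof.
move=> Hp; apply: eval_free => q Hq; rewrite /upd; case: eqP => // Eq.
by move: Hp; rewrite -Eq Hq.
Qed.

Lemma eval_subst1 psi p a V : unquantified p psi ->
  eval V (subst (subst1 p a) psi) = eval (upd V p (eval V a)) psi.
Proof.
elim/qbf_ind': psi => [n|g l IH|X f _|X f _] Hu.
- by rewrite /= /subst1 /upd; case: eqP.
- rewrite !eval_Op; congr g; elim: IH Hu => //= b l' Hb _ IHl /andP[Hub Hul].
  by rewrite Hb ?IHl.
all: rewrite eval_subst1_notin // eval_upd_notin //.
all: by apply: contra Hu; apply: free_var.
Qed.

Lemma eval_Ex_override V X f :
  eval V (Ex X f) = `[< exists T, eval (override V X T) f >].
Proof.
rewrite eval_Ex; apply: asbool_equiv_eq; split=> [[V' [HV' Hf]]|[T Hf]].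
  by exists V'; rewrite (eval_ext _ (override_agree_off HV')).
by exists (override V X T); split=> //; apply: agree_off_override.
Qed.

Lemma eval_All_override V X f :
  eval V (All X f) = `[< forall T, eval (override V X T) f >].
Proof.
rewrite eval_All; apply: asbool_equiv_eq; split=> [Hf T|Hf V' HV'].
  by apply: Hf; apply: agree_off_override.
by rewrite -(eval_ext _ (override_agree_off HV')).
Qed.

Lemma eval_BigAnd V l : eval V (BigAnd l) = all (eval V) l.
Proof. by elim: l => //= a l <-. Qed.

Lemma exists_valuation_on_image (h : nat -> nat) (X : seq nat) (T D : valuation) :
  {in X &, injective h} ->
  exists2 G : valuation, agree_off (map h X) D G & {in X, G \o h =1 T}.
Proof.
move=> h_inj; exists (fun q => if q \in map h X then T (nth 0 X (index q (map h X))) else D q).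
  by move=> q /negbTE ->.
move=> x Hx /=; rewrite map_f //; congr T.
have Hlt : index (h x) (map h X) < size X by rewrite -(size_map h) index_mem map_f.
apply: h_inj; [exact: mem_nth | exact: Hx |].
by rewrite -(nth_map 0 (h 0)) // nth_index // map_f.
Qed.

(* t ranges over assignments of X, s is the universally chosen copy X-, and b is the
   guessed value of p. *)
Section GuardedChoice.

Variables (A : Type) (a0 : A) (eqA : A -> A -> Prop) (Phi : A -> bool) (P : bool -> Prop).
Hypothesis eqA_refl : forall t, eqA t t.
Hypothesis Phi_eqA : forall s t, eqA s t -> Phi s = Phi t.

Lemma exists_guarded_choice :
  P `[< exists t, Phi t >] <->
  forall s, exists b t, [/\ P b, b = Phi t & ~~ b -> eqA t s].
Proof.
have [[t Ht]|Hn] := pselect (exists t, Phi t); last rewrite asboolF //.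
  rewrite (asboolT (ex_intro _ t Ht)); split=> [HP s|H]; first by exists true, t.
  have [[] [t' [HP Ht' Heq]]] := H t => //.
  by move: Ht; rewrite -(Phi_eqA (Heq isT)) -Ht'.
have Phi_false t : false = Phi t by apply/esym/negbTE/negP => Ht; apply: Hn; exists t.
split=> [HP s|H]; first by exists false, s.
by have [b [t [HP Hb _]]] := H a0; rewrite (Phi_false t) -Hb.
Qed.

Lemma forall_guarded_choice :
  P `[< forall t, Phi t >] <->
  forall s, exists b t, [/\ P b, b = Phi t & b -> eqA t s].
Proof.
have [Hall|Hn] := pselect (forall t, Phi t); last rewrite asboolF //.
  rewrite (asboolT Hall); split=> [HP s|H]; first by exists true, s; rewrite Hall.
  by have [[] [t [HP /esym + _]]] := H a0; rewrite Hall.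
have [t Ht] : exists t, ~~ Phi t.
  by apply: contra_notP Hn => Hex t; apply/negPn/negP => Ht; apply: Hex; exists t.
split=> [HP s|H]; first by exists false, t; rewrite (negbTE Ht).
have [[] [t' [HP Ht' Heq]]] := H t => //.
by move: Ht; rewrite -(Phi_eqA (Heq isT)) -Ht'.
Qed.

End GuardedChoice.

Lemma eval_matrix p gq (g : bool -> bool) : (forall U, eval U gq = g (U p)) ->
  forall U psi chi (X : seq nat) (xm xp : nat -> nat),
  eval U (And psi (And (Iff (Var p) chi)
            (BigAnd [seq Imp gq (Iff (Var (xp x)) (Var (xm x))) | x <- X]))) =
  [&& eval U psi, U p == eval U chi & g (U p) ==> all (fun x => U (xp x) == U (xm x)) X].
Proof.
move=> Hg U psi chi X xm xp; rewrite /And /Iff !eval_Op /= eval_BigAnd all_map.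
rewrite (@eq_all _ _ (fun x => g (U p) ==> (U (xp x) == U (xm x)))) => [|x]; last first.
  by rewrite /= Hg.
by case: (g (U p)) => //=; elim: X.
Qed.

Section Encoding.

Variables (psi phi : qbf) (X Y : seq nat) (p : nat) (xm xp : nat -> nat).
Hypothesis p_psi : p \in var psi.
Hypothesis p_phi : p \notin free phi.
Hypothesis psi_unq : unquantified p psi.
Hypothesis phi_Y : forall q, q \in var phi -> q \notin Y.
Hypothesis xm_inj : {in X &, injective xm}.
Hypothesis xp_inj : {in X &, injective xp}.
Hypothesis Xm_fresh : forall q, q \in map xm X ->
  [/\ q \notin var psi, q \notin var phi, q \notin Y & q \notin map xp X].
Hypothesis Xp_fresh : forall q, q \in map xp X ->
  [/\ q \notin var psi, q \notin var phi & q \notin Y].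

(* A valuation U of Ys over a valuation W of X- encodes the choice override V Y U of Y,
   the guess U p and the assignment U \o xp of X. *)
Let Ys := Y ++ map xp X ++ [:: p].
Let sigma q := if q \in X then Var (xp q) else Var q.
Let psi_sat V b := exists V1, agree_off Y V V1 /\ eval (upd V1 p b) psi.
Let phi_at V T := eval (override V X T) phi.

Lemma eval_psi_decode V W U : agree_off (map xm X) V W -> agree_off Ys W U ->
  eval U psi = eval (upd (override V Y U) p (U p)) psi.
Proof.
move=> HW HU; apply: eval_free => q /free_var Hq; rewrite /upd /override.
case: eqP => [->//|/eqP Hqp]; case: ifPn => // HqY.
rewrite HU ?HW //; first by apply/negP => /Xm_fresh []; rewrite Hq.
rewrite !mem_cat inE !negb_or HqY Hqp andbT /=.
by apply/negP => /Xp_fresh []; rewrite Hq.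
Qed.

Lemma eval_phi_decode V W U : agree_off (map xm X) V W -> agree_off Ys W U ->
  eval U (subst sigma phi) = phi_at V (U \o xp).
Proof.
move=> HW HU; rewrite (eval_subst_rename (r := fun q => if q \in X then xp q else q)).
- apply: eval_free => q Hq; rewrite /override /=; case: ifPn => // HqX.
  have Hv := free_var Hq.
  rewrite HU ?HW //; first by apply/negP => /Xm_fresh []; rewrite Hv.
  rewrite !mem_cat inE !negb_or phi_Y //=; apply/andP; split.
    by apply/negP => /Xp_fresh []; rewrite Hv.
  by apply: contraNneq p_phi => <-.
- by move=> q _; rewrite /sigma; case: ifP.
- move=> q; case: ifPn => HqX; last by left.
  by right; have [] := Xp_fresh (map_f xp HqX).
Qed.

Lemma Xm_decode W U : agree_off Ys W U -> {in X, U \o xm =1 W \o xm}.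
Proof.
move=> HU x Hx; apply: HU; have [Hpsi _ HY HXp] := Xm_fresh (map_f xm Hx).
rewrite !mem_cat inE !negb_or HY HXp /=; apply: contraNneq Hpsi => ->; exact: p_psi.
Qed.

Lemma exists_encoding V W V1 b Tp : agree_off (map xm X) V W -> agree_off Y V V1 ->
  exists U, [/\ agree_off Ys W U, U p = b, {in X, U \o xp =1 Tp}
              & eval U psi = eval (upd V1 p b) psi].
Proof.
move=> HW HV1; have [G HG GT] := exists_valuation_on_image Tp W xp_inj.
exists (fun q => if q == p then b else if q \in Y then V1 q else G q); split.
- move=> q; rewrite !mem_cat inE !negb_or => /and3P[HqY HqXp Hqp].
  by rewrite (negbTE Hqp) (negbTE HqY) HG.
- by rewrite eqxx.
- move=> x Hx /=; have [Hpsi _ HY] := Xp_fresh (map_f xp Hx).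
  case: eqP => [E|_]; first by move: Hpsi; rewrite E p_psi.
  by rewrite (negbTE HY); apply: GT.
- apply: eval_free => q /free_var Hq; rewrite /upd; case: eqP => // _.
  case: ifPn => // HqY; rewrite HG ?HW ?HV1 //.
    by apply/negP => /Xm_fresh []; rewrite Hq.
  by apply/negP => /Xp_fresh []; rewrite Hq.
Qed.

Lemma eval_lhs_decode a V : {subset free a <= free phi} ->
  eval V (Ex Y (subst (subst1 p a) psi)) = `[< psi_sat V (eval V a) >].
Proof.
move=> Ha; rewrite eval_Ex; apply: asbool_equiv_eq.
have aV V1 : agree_off Y V V1 -> eval V1 a = eval V a.
  by move=> HV1; apply: eval_free => q /Ha /free_var /phi_Y /HV1.
by split=> -[V1 [HV1 H]]; exists V1; split=> //; move: H; rewrite eval_subst1 // aV.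
Qed.

Lemma eval_rhs_decode gq (g : bool -> bool) V : (forall U, eval U gq = g (U p)) ->
  eval V (All (map xm X) (Ex Ys (And psi (And (Iff (Var p) (subst sigma phi))
            (BigAnd [seq Imp gq (Iff (Var (xp x)) (Var (xm x))) | x <- X]))))) =
  `[< forall Tm, exists b Tp,
        [/\ psi_sat V b, b = phi_at V Tp & g b -> {in X, Tp =1 Tm}] >].
Proof.
move=> Hg; rewrite eval_All; apply: asbool_equiv_eq; split=> [H Tm|H W HW].
  have [W HW WT] := exists_valuation_on_image Tm V xm_inj.
  move: (H W HW); rewrite eval_Ex => /asboolP [U [HU]].
  rewrite (eval_matrix Hg) => /and3P[Hpsi /eqP Up /implyP Hguard].
  exists (U p), (U \o xp); split.
  - exists (override V Y U); split; first exact: agree_off_override.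
    by rewrite -(eval_psi_decode HW HU).
  - by rewrite -(eval_phi_decode HW HU).
  - move=> /Hguard /allP guard x Hx; rewrite -WT // -(Xm_decode HU Hx) /=.
    exact/eqP/guard.
have [b [Tp [[V1 [HV1 Hpsi]] Hb Hguard]]] := H (W \o xm).
have [U [HU Up UTp HUpsi]] := exists_encoding b Tp HW HV1.
rewrite eval_Ex; apply/asboolP; exists U; split=> //.
rewrite (eval_matrix Hg) HUpsi Hpsi (eval_phi_decode HW HU) Up /=.
apply/andP; split.
  by rewrite Hb; apply/eqP/eval_ext => q; rewrite /override; case: ifPn => // /UTp.
apply/implyP => /Hguard TpTm; apply/allP => x Hx.
by have := UTp x Hx; rewrite /= TpTm // -(Xm_decode HU Hx) => ->.
Qed.

Lemma phi_at_eq V s t : {in X, s =1 t} -> phi_at V s = phi_at V t.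
Proof. by move=> Hst; apply: eval_ext => q; rewrite /override; case: ifPn => // /Hst. Qed.

Lemma qequiv_Ex_encoding :
  qequiv (Ex Y (subst (subst1 p (Ex X phi)) psi))
    (All (map xm X) (Ex Ys (And psi (And (Iff (Var p) (subst sigma phi))
       (BigAnd [seq Imp (Neg (Var p)) (Iff (Var (xp x)) (Var (xm x))) | x <- X]))))).
Proof.
move=> V; rewrite eval_lhs_decode => [|q]; last by rewrite mem_filter => /andP[].
rewrite (eval_rhs_decode (g := negb)) // eval_Ex_override.
exact/asbool_equiv_eq/(exists_guarded_choice V (psi_sat V) (fun _ _ _ => erefl) (phi_at_eq V)).
Qed.

Lemma qequiv_All_encoding :
  qequiv (Ex Y (subst (subst1 p (All X phi)) psi))
    (All (map xm X) (Ex Ys (And psi (And (Iff (Var p) (subst sigma phi))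
       (BigAnd [seq Imp (Var p) (Iff (Var (xp x)) (Var (xm x))) | x <- X]))))).
Proof.
move=> V; rewrite eval_lhs_decode => [|q]; last by rewrite mem_filter => /andP[].
rewrite (eval_rhs_decode (g := id)) // eval_All_override.
exact/asbool_equiv_eq/(forall_guarded_choice V (psi_sat V) (fun _ _ _ => erefl) (phi_at_eq V)).
Qed.

End Encoding.

Theorem lemma1 (psi phi : qbf) (X Y : seq nat) (p : nat)
  (xm xp : nat -> nat)
  (Hp : p \in var psi) (Hpf : p \notin free phi)
  (Hpq : unquantified p psi)
  (HY : all (fun y => (y \in var psi) && (y \notin var phi)) Y)
  (Hxm_inj : {in X &, injective xm})
  (Hxp_inj : {in X &, injective xp})
  (Hmp : forall x x', x \in X -> x' \in X -> xm x != xp x')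
  (Hfresh : forall x, x \in X -> forall z, z \in [:: xm x; xp x] ->
      [/\ z \notin var psi, z \notin var phi, z \notin X & z \notin Y]) :
  let sigma := fun q => if q \in X then Var (xp q) else Var q in
  qequiv (Ex Y (subst (subst1 p (Ex X phi)) psi))
         (All (map xm X) (Ex (Y ++ map xp X ++ [:: p])
            (And psi (And (Iff (Var p) (subst sigma phi))
               (BigAnd [seq Imp (Neg (Var p)) (Iff (Var (xp x)) (Var (xm x))) | x <- X])))))
  /\
  qequiv (Ex Y (subst (subst1 p (All X phi)) psi))
         (All (map xm X) (Ex (Y ++ map xp X ++ [:: p])
            (And psi (And (Iff (Var p) (subst sigma phi))
               (BigAnd [seq Imp (Var p) (Iff (Var (xp x)) (Var (xm x))) | x <- X]))))).
Proof.
move=> sigma.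
have phi_Y q : q \in var phi -> q \notin Y.
  by move=> Hq; apply/negP => /(allP HY) /andP[_]; rewrite Hq.
have Xm_fresh q : q \in map xm X ->
    [/\ q \notin var psi, q \notin var phi, q \notin Y & q \notin map xp X].
  case/mapP => x Hx ->; have [? ? _ ?] := Hfresh x Hx (xm x) (mem_head _ _).
  by split=> //; apply/mapP => -[x' Hx' /eqP]; rewrite (negbTE (Hmp x x' Hx Hx')).
have Xp_fresh q : q \in map xp X -> [/\ q \notin var psi, q \notin var phi & q \notin Y].
  case/mapP => x Hx ->.
  by have /(Hfresh x Hx) [] : xp x \in [:: xm x; xp x] by rewrite !inE eqxx orbT.
split; [exact: qequiv_Ex_encoding | exact: qequiv_All_encoding].
Qed.
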